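(* Let $X$ and $Y$ be complex Banach spaces with $Y$ continuously embedded in $X$, let $C\in L(X)$, let $B$ be a closed linear operator on $X$, let $A:\mathbb N_0\to L(Y,X)$, and let $k:\mathbb N_0\to\mathbb C$ with $k\neq0$. Let $(S(v))_{v\in\mathbb N_0}\subseteq L(X)$ be such that $S(v)Y\subseteq Y$ and $S(v)_{|Y}\in L(Y)$ for all $v\in\mathbb N_0$, and for all $v\in\mathbb N_0$ and $y\in Y$ one has $S(v)y\in D(B)$ and $$BS(v)y=k(v)Cy+\sum_{j=0}^{v}A(v-j)S(j)y .$$ Assume $\sum_{v=0}^{\infty}\|S(v)_{|Y}\|_{L(Y)}<\infty$ and $\sum_{v=0}^{\infty}\|(A\ast_0S)(v)\|_{L(Y,X)}<\infty$, where $(A\ast_0 S)(v)y:=\sum_{j=0}^{v}A(v-j)S(j)y$ for $y\in Y$. Suppose further that either (i) $f:\mathbb Z\to Y$ is bounded (in $Y$), $\sum_{v=0}^{\infty}|k(v)|<\infty$ and $\sum_{v=0}^{\infty}\|A(v)\|_{L(Y,X)}<\infty$; or (ii) $f\in l^1(\mathbb Z:Y)$, $k$ is bounded and $\sup_{v\ge0}\|A(v)\|_{L(Y,X)}<\infty$. Define $u(v):=\sum_{l=-\infty}^{v}S(v-l)f(l)$ for $v\in\mathbb Z$. Then $u$ is bounded, $u\in l^1(\mathbb Z:Y)$ provided that (ii) holds, $u(v)\in D(B)$ for all $v\in\mathbb Z$, and $$Bu(v)=\sum_{l=-\infty}^{v}k(v-l)Cf(l)+\sum_{l=-\infty}^{v}A(v-l)u(l),\quad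 v\in\mathbb Z .$$
   Context: $L(X)$, $L(Y)$, $L(Y,X)$ denote spaces of bounded linear operators with operator norms; $l^1(\mathbb Z:Y)$ is the space of summable $Y$-valued sequences on $\mathbb Z$. *)

From HB Require Import structures.
From mathcomp Require Import all_boot all_order all_algebra.
From mathcomp Require Import complex.
From mathcomp Require Import all_classical all_reals all_analysis.
Import Order.TTheory GRing.Theory Num.Theory.
Set Implicit Arguments. Unset Strict Implicit. Unset Printing Implicit Defensive.
Local Open Scope ring_scope.
Local Open Scope classical_set_scope.

(* Complex Banach spaces: completeNormedModType R[i] for R : realType.
   The library norm `|x| takes values in R[i] (always a nonnegative real);
   nrm x is its real part, i.e. the norm as a real number. *)
Definition nrm (R : realType) (V : normedModType R[i]) (x : V) : R :=
  complex.Re `|x|.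

Definition opnorm (R : realType) (U V : normedModType R[i]) (T : U -> V)
  : \bar R :=
  ereal_sup [set (nrm (T x))%:E | x in [set x : U | nrm x <= 1]].

Definition closed_operator (R : realType) (X : normedModType R[i])
    (D : set X) (B : X -> X) : Prop :=
  [/\ D 0,
      (forall (a : R[i]) (x y : X), D x -> D y -> D (a *: x + y)),
      (forall (a : R[i]) (x y : X), D x -> D y -> B (a *: x + y) = a *: B x + B y)
    & closed [set p : X * X | D p.1 /\ B p.1 = p.2]].

(* (A *_0 S)(v) y := sum_{j=0}^v A(v-j) S(j) y ; here SY j is S(j)|_Y *)
Definition convAS0 (R : realType) (Y X : normedModType R[i])
    (A : nat -> Y -> X) (SY : nat -> Y -> Y) (v : nat) (y : Y) : X :=
  \sum_(j < v.+1) A (v - j)%N (SY j y).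

(* u(v) := sum_{l=-oo}^{v} S(v-l) f(l) = sum_{m>=0} S(m) f(v-m)  (in Y) *)
Definition uconv (R : realType) (Y : normedModType R[i])
    (SY : nat -> Y -> Y) (f : int -> Y) (v : int) : Y :=
  limn (series (fun m : nat => SY m (f (v - m%:Z)))).

Definition bounded_seq (R : realType) (V : normedModType R[i]) (I : Type)
    (g : I -> V) : Prop :=
  exists M : R, forall i, nrm (g i) <= M.

Definition l1Z (R : realType) (V : normedModType R[i]) (g : int -> V) : Prop :=
  (\esum_(l in [set: int]) (nrm (g l))%:E < +oo)%E.

From HB Require Import structures.
From mathcomp Require Import all_boot all_order all_algebra.
From mathcomp Require Import complex.
From mathcomp Require Import all_classical all_reals all_analysis.
From mathcomp Require Import lra zify.
Import Order.TTheory GRing.Theory Num.Theory.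
Import numFieldNormedType.Exports.
Local Open Scope ring_scope.
Local Open Scope classical_set_scope.
Set Implicit Arguments. Unset Strict Implicit.

(* Every estimate is made with real majorants: the operator norms of S(v)|_Y,
   (A *_0 S)(v) and A(v) become nonnegative real sequences, and each series of
   the statement is dominated by the pairing of a summable and a bounded
   sequence (in case (i) |k| and ||A|| are summable and f is bounded, in case
   (ii) the roles are swapped), hence converges absolutely.  The partial sums
   P_N = sum_{m<N} S(m) f(v-m) lie in D(B), and by the equation satisfied by S,
   B P_N is the N-th partial sum of sum_m k(m) C f(v-m) + sum_n (A *_0 S)(n) f(v-n);
   closedness of B gives u(v) in D(B) and B u(v) as the sum of the two limits.
   Finally sum_n (A *_0 S)(n) f(v-n) = sum_m A(m) u(v-m): both are limits of the
   same double sum, taken along antidiagonals and along rows respectively, and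
   Tannery's theorem (dominated convergence for series) justifies the exchange. *)

Lemma gtc0_Re (R : realType) (e : R[i]) :
  0 < e -> e = (complex.Re e)%:C%C /\ 0 < complex.Re e.
Proof. by case: e => a b; rewrite ltcE /= => /andP[/eqP -> h]. Qed.

Lemma gec0_Re (R : realType) (e : R[i]) :
  0 <= e -> e = (complex.Re e)%:C%C /\ 0 <= complex.Re e.
Proof. by case: e => a b; rewrite lecE /= => /andP[/eqP -> h]. Qed.

Lemma Re_normc_ge0 (R : realType) (a : R[i]) : 0 <= complex.Re `|a|.
Proof. by have [] := gec0_Re (normr_ge0 a). Qed.

Lemma Re_normc_real (R : realType) (c : R) : complex.Re `|c%:C%C| = `|c|.
Proof. by rewrite normc_def /= expr0n /= addr0 sqrtr_sqr. Qed.

Section Nrm.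
Variables (R : realType) (V : normedModType R[i]).
Implicit Types (x y : V).

Lemma normr_nrm x : `|x| = (nrm x)%:C%C.
Proof. by have [] := gec0_Re (normr_ge0 x). Qed.

Lemma nrm_ge0 x : 0 <= nrm x.
Proof. by have [] := gec0_Re (normr_ge0 x). Qed.

Lemma nrm0 : nrm (0 : V) = 0.
Proof. by rewrite /nrm normr0. Qed.

Lemma nrm_eq0 x : nrm x = 0 -> x = 0.
Proof. by move=> x0; apply/normr0_eq0; rewrite normr_nrm x0. Qed.

Lemma nrmN x : nrm (- x) = nrm x.
Proof. by rewrite /nrm normrN. Qed.

Lemma nrmD x y : nrm (x + y) <= nrm x + nrm y.
Proof. by rewrite -lecR rmorphD /= -!normr_nrm ler_normD. Qed.

Lemma nrm_sum (I : Type) (s : seq I) (F : I -> V) :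
  nrm (\sum_(i <- s) F i) <= \sum_(i <- s) nrm (F i).
Proof.
elim: s => [|a s IH]; first by rewrite !big_nil nrm0.
by rewrite !big_cons; apply: le_trans (nrmD _ _) _; exact: lerD.
Qed.

Lemma nrmZ (a : R[i]) x : nrm (a *: x) = complex.Re `|a| * nrm x.
Proof. by rewrite /nrm normrZ (normr_nrm x); case: `|a| => p q /=; rewrite mulr0 subr0. Qed.

Lemma nrm_lim_le (z : nat -> V) (l : V) (M : R) :
  z @ \oo --> l -> (\forall N \near \oo, nrm (z N) <= M) -> nrm l <= M.
Proof.
move=> zl zM; apply/ler_addgt0Pr => e e0.
have /(cvgrPdist_lt _ _).1 /(_ e%:C%C) := zl; rewrite ltcR => /(_ e0) zle.
have [N [zNM zNe]] := filter_ex (filterI zM zle).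
rewrite -(subrKC (z N) l); apply: le_trans (nrmD _ _) _; apply: lerD => //.
by apply/ltW; rewrite -ltcR -normr_nrm.
Qed.

End Nrm.

Lemma cvg_sum_seq (K : numFieldType) (U : normedModType K) (I : Type) (s : seq I)
    (z : I -> nat -> U) (zl : I -> U) :
  (forall i, z i @ \oo --> zl i) ->
  (fun N => \sum_(i <- s) z i N) @ \oo --> \sum_(i <- s) zl i.
Proof.
move=> zcvg; elim: s => [|a s IH].
  by rewrite big_nil; under eq_fun do rewrite big_nil; exact: cvg_cst.
by rewrite big_cons; under eq_fun do rewrite big_cons; exact: cvgD.
Qed.

Section Series.
Variable R : realType.

Lemma nonneg_series_cvg (b : R ^nat) (M : R) :
  (forall n, 0 <= b n) -> (forall N, series b N <= M) ->
  [/\ cvgn (series b), limn (series b) <= M & forall N, series b N <= limn (series b)].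
Proof.
move=> b_ge0 bM.
have nd : {homo series b : n m / (n <= m)%N >-> n <= m}.
  by move=> n m nm; exact: nondecreasing_series.
have cb : cvgn (series b) by apply: nondecreasing_is_cvgn => //; exists M => _ [n _ <-].
by split => //; [apply: limr_le => //; apply: nearW | exact: nondecreasing_cvgn_le].
Qed.

Variable V : completeNormedModType R[i].

Lemma cvg_series_dominated (a : nat -> V) (b : R ^nat) (M : R) :
  (forall n, nrm (a n) <= b n) -> (forall N, series b N <= M) ->
  cvgn (series a) /\
  forall J, nrm (limn (series a) - series a J) <= M - series b J.
Proof.
move=> ab bM.
have b_ge0 n : 0 <= b n by exact: le_trans (nrm_ge0 _) (ab n).
have [cb _ _] := nonneg_series_cvg b_ge0 bM.
have sab m n : nrm (\sum_(m <= k < n) a k) <= \sum_(m <= k < n) b k.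
  by apply: le_trans (nrm_sum _ _) _; exact: ler_sum.
have ca : cvgn (series a).
  apply/cauchy_cvgP/cauchy_seriesP => e /gtc0_Re[eE e0]; rewrite eE.
  move/cauchy_cvgP/cauchy_seriesP: cb => /(_ _ e0).
  apply: filterS => -[m n] /= bmn; rewrite normr_nrm ltcR.
  exact: le_lt_trans (sab m n) (le_lt_trans (ler_norm _) bmn).
split => // J; apply: nrm_lim_le (cvgB ca (cvg_cst (series a J))) _.
near=> N; have JN : (J <= N)%N by near: N; exact: nbhs_infty_ge.
have -> : (series a - cst (series a J)) N = series a N - series a J by [].
rewrite sub_series JN; apply: le_trans (sab _ _) _.
by have := sub_series b J N; rewrite JN => <-; rewrite lerD2r.
Unshelve. all: by end_near. Qed.

Lemma tannery (x : nat -> nat -> V) (xi : nat -> V) (w : R ^nat) (W : R) :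
  (forall N m, nrm (x N m) <= w m) ->
  (forall m, (fun N => x N m) @ \oo --> xi m) ->
  (forall N, series w N <= W) ->
  cvgn (series xi) /\ (fun N => series (x N) N) @ \oo --> limn (series xi).
Proof.
move=> xw xcvg wW.
have w_ge0 m : 0 <= w m by exact: le_trans (nrm_ge0 _) (xw 0%N m).
have [cw _ w_le] := nonneg_series_cvg w_ge0 wW.
have xiw m : nrm (xi m) <= w m by apply: nrm_lim_le (xcvg m) _; apply: nearW.
have [cxi tail] := cvg_series_dominated xiw w_le.
split => //; apply/cvgrPdist_lt => e' /gtc0_Re[-> e0].
set e := complex.Re e' in e0 *; have e3 : 0 < e / 3 by rewrite divr_gt0.
have [M wM] := filter_ex ((cvgrPdist_lt _ _).1 cw _ e3).
have head := (cvgrPdist_lt _ _).1 (cvg_sum_seq (s := index_iota 0 M) xcvg) (e / 3)%:C%C.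
rewrite ltcR in head; have {}head := head _ e3.
near=> N; have MN : (M <= N)%N by near: N; exact: nbhs_infty_ge.
have -> : limn (series xi) - series (x N) N = (limn (series xi) - series xi M)
    + (series xi M - \sum_(0 <= m < M) x N m) - \sum_(M <= m < N) x N m.
  rewrite /series /= (big_cat_nat (leq0n M) MN) /= opprD addrA.
  by congr (_ - _); rewrite addrA subrK.
rewrite normr_nrm ltcR; apply: le_lt_trans (nrmD _ _) _; rewrite nrmN.
apply: le_lt_trans (lerD (nrmD _ _) (lexx _)) _.
have tail_xi := tail M.
have head_N : nrm (series xi M - \sum_(0 <= m < M) x N m) < e / 3.
  by rewrite -ltcR -normr_nrm; near: N; exact: head.
have tail_x : nrm (\sum_(M <= m < N) x N m) <= series w N - series w M.
  by rewrite sub_series MN; apply: le_trans (nrm_sum _ _) _; exact: ler_sum.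
have tail_w : limn (series w) - series w M < e / 3 by apply: le_lt_trans wM; exact: ler_norm.
have := w_le N; lra.
Unshelve. all: by end_near. Qed.

End Series.

Section Esum.
Variable R : realType.
Local Open Scope ereal_scope.

Lemma esum_ge_sum_seq (T : choiceType) (g : T -> \bar R) (s : seq T) :
  (forall x, 0 <= g x) -> uniq s -> \sum_(x <- s) g x <= \esum_(i in [set: T]) g i.
Proof.
move=> g_ge0 s_uniq; apply: esum_ge; exists [set` s]; first by split.
by rewrite -fsbig_seq.
Qed.

Lemma esum_le_sum_seq (T : choiceType) (g : T -> \bar R) (M : \bar R) :
  (forall s, uniq s -> \sum_(x <- s) g x <= M) -> \esum_(i in [set: T]) g i <= M.
Proof.
move=> gM; apply: ge_ereal_sup => _ [X [finX _] <-].
by rewrite fsbig_finite //; apply: gM; exact: finmap.fset_uniq.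
Qed.

Lemma esum_real_sum_seq_le (T : choiceType) (g : T -> R) :
  (forall x, (0 <= g x)%R) -> \esum_(i in [set: T]) (g i)%:E < +oo ->
  exists M : R, forall s, uniq s -> (\sum_(x <- s) g x <= M)%R.
Proof.
move=> g_ge0 g_fin; exists (fine (\esum_(i in [set: T]) (g i)%:E)) => s s_uniq.
rewrite -lee_fin fineK ?ge0_fin_numE ?esum_ge0// => [|x _]; last by rewrite lee_fin.
by rewrite -sumEFin; apply: esum_ge_sum_seq => // x; rewrite lee_fin.
Qed.

Lemma esum_real_lt_pinfty (T : choiceType) (g : T -> R) (M : R) :
  (forall s, uniq s -> (\sum_(x <- s) g x <= M)%R) ->
  \esum_(i in [set: T]) (g i)%:E < +oo.
Proof.
move=> gM; apply: (@le_lt_trans _ _ M%:E); last exact: ltry.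
by apply: esum_le_sum_seq => s s_uniq; rewrite sumEFin lee_fin; exact: gM.
Qed.

Lemma esum_series_fine_le (g : nat -> \bar R) :
  (forall n, 0 <= g n) -> \esum_(i in [set: nat]) g i < +oo ->
  (forall n, g n < +oo) /\ exists M : R, forall N, (series (fine \o g) N <= M)%R.
Proof.
move=> g_ge0 g_fin.
have g_le n : g n <= \esum_(i in [set: nat]) g i.
  by have := esum_ge_sum_seq g_ge0 (s := [:: n]) erefl; rewrite big_seq1.
have g_lt n : g n < +oo by exact: le_lt_trans (g_le n) g_fin.
split => //; exists (fine (\esum_(i in [set: nat]) g i)) => N.
rewrite -lee_fin fineK ?ge0_fin_numE ?esum_ge0// -sumEFin.
under eq_bigr do rewrite /= fineK ?ge0_fin_numE//.
exact/esum_ge_sum_seq/iota_uniq.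
Qed.

End Esum.

Lemma bounded_seq_l1Z (R : realType) (V : normedModType R[i]) (g : int -> V) :
  l1Z g -> bounded_seq g.
Proof.
move=> /(esum_real_sum_seq_le (fun l => nrm_ge0 (g l))) [M gM].
by exists M => l; have := gM [:: l] isT; rewrite big_seq1.
Qed.

Section Opnorm.
Variables (R : realType) (U W : normedModType R[i]).

Lemma opnorm_ge0 (T : U -> W) : T 0 = 0 -> (0 <= opnorm T)%E.
Proof.
move=> T0; apply: ereal_sup_ubound; exists 0; last by rewrite T0 nrm0.
by rewrite /= nrm0 ler01.
Qed.

Lemma nrm_le_opnorm (T : U -> W) : scalable T -> (opnorm T < +oo)%E ->
  forall x, nrm (T x) <= fine (opnorm T) * nrm x.
Proof.
move=> TZ T_fin x.
have T0 : T 0 = 0 by rewrite -(scale0r (0 : U)) TZ scale0r.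
have [x0|x0] := eqVneq (nrm x) 0; first by rewrite x0 mulr0 (nrm_eq0 x0) T0 nrm0.
have x_gt0 : 0 < nrm x by rewrite lt0r x0 nrm_ge0.
set c := (nrm x)^-1%:C%C.
have nrm_c : complex.Re `|c| = (nrm x)^-1 by rewrite Re_normc_real ger0_norm // invr_ge0 ltW.
have : ((nrm (T (c *: x)))%:E <= opnorm T)%E.
  by apply: ereal_sup_ubound; exists (c *: x); rewrite //= nrmZ nrm_c mulVf.
rewrite -[opnorm T]fineK ?ge0_fin_numE ?opnorm_ge0 // lee_fin TZ nrmZ nrm_c.
by rewrite ler_pdivrMl // mulrC.
Qed.

Lemma esum_opnorm_majorant (T : nat -> U -> W) :
  (forall v, scalable (T v)) ->
  (\esum_(v in [set: nat]) opnorm (T v) < +oo)%E ->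
  exists (s : R ^nat) (M : R), [/\ forall v, 0 <= s v,
    forall v x, nrm (T v x) <= s v * nrm x & forall N, series s N <= M].
Proof.
move=> TZ T_sum.
have T0 v : T v 0 = 0 by rewrite -(scale0r (0 : U)) TZ scale0r.
have [T_fin [M sM]] := esum_series_fine_le (fun v => opnorm_ge0 (T0 v)) T_sum.
exists (fun v => fine (opnorm (T v))), M; split => // [v|v x].
  exact/fine_ge0/opnorm_ge0.
exact: nrm_le_opnorm.
Qed.

Lemma sup_opnorm_bound (T : nat -> U -> W) :
  (forall v, scalable (T v)) ->
  (ereal_sup [set opnorm (T v) | v in [set: nat]] < +oo)%E ->
  exists M, 0 <= M /\ forall v x, nrm (T v x) <= M * nrm x.
Proof.
move=> TZ T_sup.
have T0 v : T v 0 = 0 by rewrite -(scale0r (0 : U)) TZ scale0r.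
have T_le v : (opnorm (T v) <= ereal_sup [set opnorm (T v) | v in [set: nat]])%E.
  by apply: ereal_sup_ubound; exists v.
have sup_ge0 := le_trans (opnorm_ge0 (T0 0%N)) (T_le 0%N).
exists (fine (ereal_sup [set opnorm (T v) | v in [set: nat]])).
split => [|v x]; first exact: fine_ge0.
have T_fin : (opnorm (T v) < +oo)%E by exact: le_lt_trans (T_le v) T_sup.
apply: le_trans (nrm_le_opnorm (TZ v) T_fin x) _; apply: ler_wpM2r; first exact: nrm_ge0.
by rewrite fine_le ?ge0_fin_numE ?opnorm_ge0.
Qed.

Lemma continuous_linear_bound (T : {linear U -> W}) : continuous T ->
  exists c, 0 <= c /\ forall x, nrm (T x) <= c * nrm x.
Proof.
move/linear_bounded_continuous => /linear_boundedP /pinfty_ex_gt0 [r r0 Tr].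
have [rE r_gt0] := gtc0_Re r0; exists (complex.Re r); split; first exact: ltW.
by move=> x; have := Tr x; rewrite !normr_nrm rE -rmorphM /= lecR.
Qed.

End Opnorm.

Section ClosedOperator.
Variables (R : realType) (X : normedModType R[i]) (D : set X) (B : X -> X).
Hypothesis B_closed : closed_operator D B.

Lemma closed_operator_sum (I : Type) (s : seq I) (F : I -> X) :
  (forall i, D (F i)) ->
  D (\sum_(i <- s) F i) /\ B (\sum_(i <- s) F i) = \sum_(i <- s) B (F i).
Proof.
case: B_closed => D0 DD BD _ DF.
have B0 : B 0 = 0.
  have := BD 1 0 0 D0 D0; rewrite !scale1r addr0 => B00.
  by apply: (@addrI _ (B 0)); rewrite addr0 -B00.
elim: s => [|a s [Ds Bs]]; first by rewrite !big_nil.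
have := DD 1 _ _ (DF a) Ds; have := BD 1 _ _ (DF a) Ds.
by rewrite !big_cons !scale1r -Bs.
Qed.

Lemma closed_operator_series (x : nat -> X) :
  (forall m, D (x m)) -> cvgn (series x) -> cvgn (series (B \o x)) ->
  D (limn (series x)) /\ B (limn (series x)) = limn (series (B \o x)).
Proof.
move=> Dx cx cBx; case: (B_closed) => _ _ _ graph_closed.
have DBx N : D (series x N) /\ B (series x N) = series (B \o x) N.
  exact: closed_operator_sum.
have graph_cvg : (fun N => (series x N, series (B \o x) N)) @ \oo -->
    (limn (series x), limn (series (B \o x))) by exact: cvg_pair.
apply: (closed_cvg _ graph_closed _ _ graph_cvg).
by apply: nearW => N; exact: DBx.
Qed.

End ClosedOperator.

Lemma big_nat_triangle (V : zmodType) (G : nat -> nat -> V) (N : nat) :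
  \sum_(0 <= m < N) \sum_(0 <= j < N - m) G m j =
  \sum_(0 <= n < N) \sum_(0 <= j < n.+1) G (n - j)%N j.
Proof.
elim: N => [|N IH]; first by rewrite !big_geq.
rewrite [RHS]big_nat_recr //= -IH.
have split_last m : (0 <= m < N.+1)%N ->
    \sum_(0 <= j < N.+1 - m) G m j = \sum_(0 <= j < N - m) G m j + G m (N - m)%N.
  by move=> /andP[_ mN]; rewrite subSn -1?ltnS // big_nat_recr.
rewrite (eq_big_nat _ _ split_last).
rewrite big_split /= [in X in X + _ = _]big_nat_recr //= subnn (big_geq (leqnn 0)) addr0.
congr (_ + _); rewrite (big_nat_rev _ _ 0 N.+1) /=; apply: eq_big_nat => i /andP[_ iN].
by rewrite add0n subSS subKn.
Qed.

Lemma series_shift_int_le (R : realType) (g : int -> R) (L : R) (v : int) :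
  (forall r, uniq r -> \sum_(l <- r) g l <= L) ->
  forall N, series (fun m => g (v - m%:Z)) N <= L.
Proof.
move=> gL N; have := gL [seq v - m%:Z | m <- index_iota 0 N]; rewrite big_map; apply.
by rewrite map_inj_uniq ?iota_uniq // => m n /addrI /oppr_inj [].
Qed.

Section ConvolutionMajorant.
Variables (R : realType) (Y Z : completeNormedModType R[i]).
Variables (T : nat -> Y -> Z) (s : R ^nat) (Ms : R) (f : int -> Y) (Mf : R).
Hypothesis s_ge0 : forall m, 0 <= s m.
Hypothesis T_le : forall m y, nrm (T m y) <= s m * nrm y.
Hypothesis s_sum : forall N, series s N <= Ms.
Hypothesis f_le : forall l, nrm (f l) <= Mf.

Definition conv_majorant (l : int) : R :=
  limn (series (fun j => s j * nrm (f (l - j%:Z)))).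

Lemma conv_majorant_cvg l :
  [/\ cvgn (series (fun j => s j * nrm (f (l - j%:Z)))), conv_majorant l <= Ms * Mf
    & forall N, series (fun j => s j * nrm (f (l - j%:Z))) N <= conv_majorant l].
Proof.
have Mf_ge0 : 0 <= Mf := le_trans (nrm_ge0 _) (f_le 0).
apply: nonneg_series_cvg => [j|N]; first by rewrite mulr_ge0 ?nrm_ge0.
apply: le_trans (_ : series (fun j => s j * Mf) N <= _).
  by apply: ler_sum => j _; rewrite ler_wpM2l.
by rewrite /series /= -mulr_suml ler_wpM2r // s_sum.
Qed.

Lemma nrm_series_conv_le l N :
  nrm (series (fun m => T m (f (l - m%:Z))) N) <= conv_majorant l.
Proof.
have [_ _ le_lim] := conv_majorant_cvg l; apply: le_trans (le_lim N).
by apply: le_trans (nrm_sum _ _) _; apply: ler_sum => m _; exact: T_le.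
Qed.

Lemma conv_majorant_ge0 l : 0 <= conv_majorant l.
Proof. by have [_ _ /(_ 0%N)] := conv_majorant_cvg l; rewrite /series /= big_geq. Qed.

Lemma cvg_series_conv l : cvgn (series (fun m => T m (f (l - m%:Z)))).
Proof.
have [_ _ le_lim] := conv_majorant_cvg l.
by have [] := cvg_series_dominated (fun m => T_le m (f (l - m%:Z))) le_lim.
Qed.

Lemma nrm_lim_series_conv_le l :
  nrm (limn (series (fun m => T m (f (l - m%:Z))))) <= conv_majorant l.
Proof.
apply: nrm_lim_le (cvg_series_conv (l := l)) _.
by apply: nearW => N; exact: nrm_series_conv_le.
Qed.

Lemma bounded_lim_series_conv :
  bounded_seq (fun l => limn (series (fun m => T m (f (l - m%:Z))))).
Proof.
exists (Ms * Mf) => l.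
by apply: le_trans (nrm_lim_series_conv_le l) _; have [] := conv_majorant_cvg l.
Qed.

(* Young's inequality for l^1 * l^1. *)
Lemma sum_conv_majorant_le (Lf : R) :
  (forall r, uniq r -> \sum_(l <- r) nrm (f l) <= Lf) ->
  forall r, uniq r -> \sum_(l <- r) conv_majorant l <= Ms * Lf.
Proof.
move=> fL r r_uniq.
have Lf_ge0 : 0 <= Lf by have := fL [::] isT; rewrite big_nil.
have sum_cvg : (fun N => \sum_(l <- r) series (fun j => s j * nrm (f (l - j%:Z))) N)
    @ \oo --> \sum_(l <- r) conv_majorant l.
  by apply: cvg_sum_seq => l; have [] := conv_majorant_cvg l.
rewrite -(cvg_lim _ sum_cvg) //; apply: limr_le.
  by apply/cvg_ex; eexists; exact: sum_cvg.
apply: nearW => N; rewrite /series /= exchange_big /=.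
apply: le_trans (_ : \sum_(0 <= j < N) s j * Lf <= _).
  2: by rewrite -mulr_suml ler_wpM2r // s_sum.
apply: ler_sum => j _; rewrite -mulr_sumr ler_wpM2l //.
have := fL [seq l - j%:Z | l <- r]; rewrite big_map; apply.
by rewrite map_inj_uniq //; exact: addIr.
Qed.

Lemma l1Z_lim_series_conv :
  l1Z f -> l1Z (fun l => limn (series (fun m => T m (f (l - m%:Z))))).
Proof.
move=> /(esum_real_sum_seq_le (fun l => nrm_ge0 (f l))) [Lf fL].
apply: (esum_real_lt_pinfty (M := Ms * Lf)) => r r_uniq.
apply: le_trans (sum_conv_majorant_le fL r_uniq).
by apply: ler_sum => l _; exact: nrm_lim_series_conv_le.
Qed.

End ConvolutionMajorant.

Definition summable_pairing (R : realType) (a b : R ^nat) : Prop :=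
  exists W, forall N, series (fun m => a m * b m) N <= W.

Section SummablePairing.
Variables (R : realType) (a b : R ^nat) (Ma Mb : R).
Hypotheses (a_ge0 : forall m, 0 <= a m) (b_ge0 : forall m, 0 <= b m).

Lemma summable_pairing_l1_linf :
  (forall N, series a N <= Ma) -> (forall m, b m <= Mb) -> summable_pairing a b.
Proof.
move=> a_sum b_le; exists (Ma * Mb) => N; have Mb_ge0 := le_trans (b_ge0 0) (b_le 0).
apply: le_trans (_ : series (fun m => a m * Mb) N <= _).
  by apply: ler_sum => m _; rewrite ler_wpM2l.
by rewrite /series /= -mulr_suml ler_wpM2r // a_sum.
Qed.

Lemma summable_pairing_linf_l1 :
  (forall m, a m <= Ma) -> (forall N, series b N <= Mb) -> summable_pairing a b.
Proof.
move=> a_le b_sum; exists (Mb * Ma) => N; have Ma_ge0 := le_trans (a_ge0 0) (a_le 0).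
apply: le_trans (_ : series (fun m => b m * Ma) N <= _).
  by apply: ler_sum => m _; rewrite mulrC ler_wpM2l.
by rewrite /series /= -mulr_suml ler_wpM2r // b_sum.
Qed.

End SummablePairing.

Section CauchyProduct.
Variables (R : realType) (X Y : completeNormedModType R[i]).
Variables (A : nat -> {linear Y -> X}) (T : nat -> Y -> Y) (f : int -> Y).

Lemma series_A_series_conv (v : int) (N : nat) :
  series (fun m => A m (series (fun j => T j (f (v - m%:Z - j%:Z))) (N - m)%N)) N =
  series (fun n => convAS0 (fun n => A n : Y -> X) T n (f (v - n%:Z))) N.
Proof.
rewrite /series /=; under eq_bigr do rewrite linear_sum.
rewrite big_nat_triangle; apply: eq_bigr => n _.
rewrite /convAS0 -(big_mkord xpredT (fun j => A (n - j)%N (T j (f (v - n%:Z))))).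
apply: eq_big_nat => j /andP[_ jn].
by have -> : v - (n - j)%N%:Z - j%:Z = v - n%:Z by lia.
Qed.

Variables (s a : R ^nat) (Ms Mf : R).
Hypothesis A_cont : forall m, continuous (A m).
Hypothesis a_ge0 : forall m, 0 <= a m.
Hypothesis A_le : forall m y, nrm (A m y) <= a m * nrm y.
Hypothesis s_ge0 : forall m, 0 <= s m.
Hypothesis T_le : forall m y, nrm (T m y) <= s m * nrm y.
Hypothesis s_sum : forall N, series s N <= Ms.
Hypothesis f_le : forall l, nrm (f l) <= Mf.

Lemma cvg_series_A_uconv (v : int) :
  summable_pairing a (fun m => conv_majorant s f (v - m%:Z)) ->
  cvgn (series (fun m => A m (uconv T f (v - m%:Z)))) /\
  series (fun n => convAS0 (fun n => A n : Y -> X) T n (f (v - n%:Z))) @ \oo -->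
    limn (series (fun m => A m (uconv T f (v - m%:Z)))).
Proof.
move=> [W aW].
have x_le N m : nrm (A m (series (fun j => T j (f (v - m%:Z - j%:Z))) (N - m)%N)) <=
    a m * conv_majorant s f (v - m%:Z).
  by apply: le_trans (A_le _ _) _; rewrite ler_wpM2l //; exact: nrm_series_conv_le.
have x_cvg m : (fun N => A m (series (fun j => T j (f (v - m%:Z - j%:Z))) (N - m)%N))
    @ \oo --> A m (uconv T f (v - m%:Z)).
  apply: continuous_cvg; first exact: A_cont.
  exact: cvg_comp (cvg_subnr m) (cvg_series_conv s_ge0 T_le s_sum f_le (l := v - m%:Z)).
have [cvg_A lim_A] := tannery x_le x_cvg aW.
have conv_E : (fun N => series (fun m =>
      A m (series (fun j => T j (f (v - m%:Z - j%:Z))) (N - m)%N)) N) =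
    series (fun n => convAS0 (fun n => A n : Y -> X) T n (f (v - n%:Z))).
  by apply/funext => N; exact: series_A_series_conv.
by split => //; rewrite -conv_E.
Qed.

End CauchyProduct.

Lemma closed_operator_uconv (R : realType) (X Y : completeNormedModType R[i])
    (iota : {linear Y -> X}) (D : set X) (B : X -> X) (S : nat -> X -> X)
    (T : nat -> Y -> Y) (K F : nat -> Y -> X) (f : int -> Y) (v : int) :
  continuous iota -> closed_operator D B ->
  (forall m y, iota (T m y) = S m (iota y)) ->
  (forall m y, D (S m (iota y))) ->
  (forall m y, B (S m (iota y)) = K m y + F m y) ->
  cvgn (series (fun m => T m (f (v - m%:Z)))) ->
  cvgn (series (fun m => K m (f (v - m%:Z)))) ->
  cvgn (series (fun m => F m (f (v - m%:Z)))) ->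
  D (iota (uconv T f v)) /\
  B (iota (uconv T f v)) =
    limn (series (fun m => K m (f (v - m%:Z)))) + limn (series (fun m => F m (f (v - m%:Z)))).
Proof.
move=> iota_cont B_closed iotaT DS BS cvg_T cvg_K cvg_F.
have iota_series : series (fun m => S m (iota (f (v - m%:Z)))) =
    iota \o series (fun m => T m (f (v - m%:Z))).
  by apply: funext => N; rewrite /series /= linear_sum; apply: eq_bigr => m _; rewrite iotaT.
have S_cvg : series (fun m => S m (iota (f (v - m%:Z)))) @ \oo --> iota (uconv T f v).
  by rewrite iota_series; apply: continuous_cvg; [exact: iota_cont | exact: cvg_T].
have lim_S : limn (series (fun m => S m (iota (f (v - m%:Z))))) = iota (uconv T f v).
  exact: cvg_lim.
have BS_KF : B \o (fun m => S m (iota (f (v - m%:Z)))) =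
    (fun m => K m (f (v - m%:Z))) + (fun m => F m (f (v - m%:Z))).
  by apply: funext => m /=; rewrite BS.
rewrite -lim_S -(limD cvg_K cvg_F) -seriesD -BS_KF; apply: closed_operator_series => //.
- exact: cvgP S_cvg.
- by rewrite BS_KF seriesD; exact: is_cvgD.
Qed.

Lemma cvg_series_scale_dominated (R : realType) (Y X : completeNormedModType R[i])
    (k : nat -> R[i]) (L : Y -> X) (c : R) (g : nat -> Y) :
  0 <= c -> (forall y, nrm (L y) <= c * nrm y) ->
  summable_pairing (fun m => nrm (k m : R[i]^o)) (fun m => nrm (g m)) ->
  cvgn (series (fun m => k m *: L (g m))).
Proof.
move=> c_ge0 L_le [W kgW].
have kL_le m : nrm (k m *: L (g m)) <= c * (nrm (k m : R[i]^o) * nrm (g m)).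
  by rewrite nrmZ mulrCA ler_wpM2l ?Re_normc_ge0 //; exact: L_le.
have cW N : series (fun m => c * (nrm (k m : R[i]^o) * nrm (g m))) N <= c * W.
  by rewrite /series /= -mulr_sumr ler_wpM2l // kgW.
by have [] := cvg_series_dominated kL_le cW.
Qed.

Lemma convAS0_scalable (R : realType) (X Y : normedModType R[i])
    (A : nat -> {linear Y -> X}) (T : nat -> {linear Y -> Y}) (v : nat) :
  scalable (convAS0 (fun n => A n : Y -> X) (fun n => T n : Y -> Y) v).
Proof.
by move=> a y; rewrite /convAS0 scaler_sumr; apply: eq_bigr => j _; rewrite !linearZ.
Qed.

Section ConvolutionPairings.
Variables (R : realType) (X Y : completeNormedModType R[i]).
Variables (A : nat -> {linear Y -> X}) (k : nat -> R[i]) (f : int -> Y).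
Variables (s : R ^nat) (Ms Mf : R).
Hypotheses (s_ge0 : forall m, 0 <= s m) (s_sum : forall N, series s N <= Ms).
Hypothesis f_le : forall l, nrm (f l) <= Mf.

Definition convolution_pairings (v : int) : Prop :=
  summable_pairing (fun m => nrm (k m : R[i]^o)) (fun m => nrm (f (v - m%:Z))) /\
  exists a : R ^nat, [/\ forall m, 0 <= a m, forall m y, nrm (A m y) <= a m * nrm y
    & summable_pairing a (fun m => conv_majorant s f (v - m%:Z))].

Lemma convolution_pairings_l1_linf :
  (\esum_(v in [set: nat]) (nrm (k v : R[i]^o))%:E < +oo)%E ->
  (\esum_(v in [set: nat]) opnorm (A v) < +oo)%E ->
  forall v, convolution_pairings v.
Proof.
move=> k_sum A_sum v.
have [_ [Mk k_le]] := esum_series_fine_le (fun m => lee_tofin (nrm_ge0 (k m : R[i]^o))) k_sum.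
have [a [Ma [a_ge0 A_le a_sum]]] := esum_opnorm_majorant (fun m => linearZZ (A m)) A_sum.
split; first exact: summable_pairing_l1_linf (fun m => nrm_ge0 _) (fun m => nrm_ge0 _)
  k_le (fun m => f_le _).
exists a; split => //; apply: (summable_pairing_l1_linf (Mb := Ms * Mf) a_ge0 _ a_sum) => m.
  exact: conv_majorant_ge0.
by have [] := conv_majorant_cvg s_ge0 s_sum f_le (v - m%:Z).
Qed.

Lemma convolution_pairings_linf_l1 :
  l1Z f -> bounded_seq (fun v : nat => (k v : R[i]^o)) ->
  (ereal_sup [set opnorm (A v) | v in [set: nat]] < +oo)%E ->
  forall v, convolution_pairings v.
Proof.
move=> /(esum_real_sum_seq_le (fun l => nrm_ge0 (f l))) [Lf fL] [Mk k_le] A_sup v.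
have [Ma [Ma_ge0 A_le]] := sup_opnorm_bound (fun m => linearZZ (A m)) A_sup.
split; first exact: summable_pairing_linf_l1 (fun m => nrm_ge0 _) (fun m => nrm_ge0 _)
  k_le (series_shift_int_le v fL).
exists (fun=> Ma); split => //.
apply: summable_pairing_linf_l1 (fun=> Ma_ge0) _ (fun=> lexx Ma) _.
  by move=> m; exact: conv_majorant_ge0.
apply: (series_shift_int_le (g := conv_majorant s f)) => r.
exact: (sum_conv_majorant_le s_ge0 s_sum f_le fL).
Qed.

End ConvolutionPairings.

Unset Implicit Arguments. Set Strict Implicit.

Theorem theorem2p4 (R : realType)
  (X Y : completeNormedModType R[i])
  (iota : {linear Y -> X})
  (iota_inj : injective iota) (iota_cont : continuous iota)
  (C : {linear X -> X}) (C_cont : continuous C)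
  (D : set X) (B : X -> X) (B_closed : closed_operator D B)
  (A : nat -> {linear Y -> X}) (A_cont : forall v, continuous (A v))
  (k : nat -> R[i]) (k_neq0 : k <> (fun _ => 0))
  (S : nat -> {linear X -> X}) (S_cont : forall v, continuous (S v))
  (SY : nat -> {linear Y -> Y}) (SY_cont : forall v, continuous (SY v))
  (SY_restr : forall v (y : Y), iota (SY v y) = S v (iota y))
  (SD : forall v (y : Y), D (S v (iota y)))
  (SB : forall v (y : Y),
     B (S v (iota y)) = k v *: C (iota y) + \sum_(j < v.+1) A (v - j)%N (SY j y))
  (S_sum : (\esum_(v in [set: nat]) opnorm (SY v) < +oo)%E)
  (AS_sum : (\esum_(v in [set: nat])
               opnorm (convAS0 (fun n => A n : Y -> X) (fun n => SY n : Y -> Y) v)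
             < +oo)%E)
  (f : int -> Y)
  (hyp : (bounded_seq f
          /\ (\esum_(v in [set: nat]) (nrm (k v : R[i]^o))%:E < +oo)%E
          /\ (\esum_(v in [set: nat]) opnorm (A v) < +oo)%E)
      \/ (l1Z f
          /\ bounded_seq (fun v : nat => (k v : R[i]^o))
          /\ (ereal_sup [set opnorm (A v) | v in [set: nat]] < +oo)%E)) :
  let u := uconv (fun n => SY n : Y -> Y) f in
  (forall v : int, cvgn (series (fun m : nat => SY m (f (v - m%:Z)))))
  /\ bounded_seq u
  /\ ((l1Z f
       /\ bounded_seq (fun v : nat => (k v : R[i]^o))
       /\ (ereal_sup [set opnorm (A v) | v in [set: nat]] < +oo)%E) -> l1Z u)
  /\ (forall v : int, D (iota (u v)))
  /\ (forall v : int,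
        cvgn (series (fun m : nat => k m *: C (iota (f (v - m%:Z)))))
        /\ cvgn (series (fun m : nat => A m (u (v - m%:Z))))
        /\ B (iota (u v)) =
             limn (series (fun m : nat => k m *: C (iota (f (v - m%:Z)))))
             + limn (series (fun m : nat => A m (u (v - m%:Z))))).
Proof.
move=> u.
have [s [Ms [s_ge0 SY_le s_sum]]] := esum_opnorm_majorant (fun v => linearZZ (SY v)) S_sum.
have [sAS [MAS [sAS_ge0 AS_le sAS_sum]]] :=
  esum_opnorm_majorant (convAS0_scalable A SY) AS_sum.
have [c [c_ge0 Ci_le]] := continuous_linear_bound (T := C \o iota)
  (fun y => continuous_comp (iota_cont y) (C_cont _)).
have [Mf f_le] : bounded_seq f by case: hyp => [[]|[/bounded_seq_l1Z]].
have pairings : forall v, convolution_pairings A k f s v.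
  case: hyp => [[_ [k_sum A_sum]] | [f_l1 [k_bd A_sup]]].
  - exact: convolution_pairings_l1_linf s_ge0 s_sum f_le k_sum A_sum.
  - exact: convolution_pairings_linf_l1 s_ge0 s_sum f_le f_l1 k_bd A_sup.
have cvg_u v := cvg_series_conv s_ge0 SY_le s_sum f_le (l := v).
have cvg_K v := cvg_series_scale_dominated c_ge0 Ci_le (pairings v).1.
have cvg_AS v := cvg_series_conv sAS_ge0 AS_le sAS_sum f_le (l := v).
have B_u v := closed_operator_uconv (S := fun m => S m) (K := fun m y => k m *: C (iota y))
  iota_cont B_closed SY_restr SD SB (cvg_u v) (cvg_K v) (cvg_AS v).
split; first exact: cvg_u.
split; first exact: bounded_lim_series_conv s_ge0 SY_le s_sum f_le.
split; first by case=> f_l1 _; exact: l1Z_lim_series_conv s_ge0 SY_le s_sum f_le f_l1.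
split; first by move=> v; case: (B_u v).
move=> v; have [_ [a [a_ge0 A_le aW]]] := pairings v.
have [cvg_A AS_A] := cvg_series_A_uconv A_cont a_ge0 A_le s_ge0 SY_le s_sum f_le aW.
split; [exact: cvg_K | split => //].
by rewrite (B_u v).2 (cvg_lim _ AS_A).
Qed.
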